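(* Let $m\ge 2$, $n\ge 1$, and let $\overrightarrow{K_{1,n}}$ be an orientation of the star $K_{1,n}$. Let $m\overrightarrow{K_{1,n}}$ be the disjoint union of $m$ copies of $\overrightarrow{K_{1,n}}$. Then $m\overrightarrow{K_{1,n}}$ is $\{0,2\}$-antimagic and $\{0,1,2\}$-antimagic if and only if each center is neither a sink nor a source.
   Context: The center of a star $K_{1,n}$ is its vertex of degree $n$ (for $n=1$, either vertex); a source is a vertex of in-degree $0$ and a sink a vertex of out-degree $0$. In an oriented graph $\overrightarrow{G}$, $d(u,v)$ is the length of a shortest directed path from $u$ to $v$ ($d(u,u)=0$, $d(u,v)=\infty$ if there is none). Let $\partial=\max\{d(u,v)<\infty : u,v\in V(\overrightarrow{G})\}$. A distance set is a nonempty $D\subseteq\{0,1,\dots,\partial\}$. The $D$-neighborhood of $u$ is $N_D(u)=\{v : d(u,v)\in D\}$. For a bijection $f:V(\overrightarrow{G})\to\{1,\dots,|V(\overrightarrow{G})|\}$, the $D$-weight of $u$ is $\omega_D(u)=\sum_{v\in N_D(u)} f(v)$. $\overrightarrow{G}$ is $D$-antimagic if $D\subseteq\{0,\dots,\partial\}$ (so $\{0,2\}$- or $\{0,1,2\}$-antimagic requires $\partial\ge 2$) and there is such a bijection $f$ with all $D$-weights pairwise distinct. *)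

From mathcomp Require Import all_boot.
From mathcomp Require Import all_order.
Set Implicit Arguments. Unset Strict Implicit. Unset Printing Implicit Defensive.

Section OrientedGraphs.
Variables (T : finType) (arc : rel T).

Fixpoint walkn (k : nat) (u v : T) : bool :=
  if k is k'.+1 then [exists w, arc u w && walkn k' w v] else u == v.

(* d(u,v) = k : shortest directed path from u to v has length k
   (a shortest walk is a shortest path); d(u,u) = 0 *)
Definition is_dist (u v : T) (k : nat) : bool :=
  walkn k u v && [forall j : 'I_k, ~~ walkn j u v].

Definition le_diam (k : nat) : Prop :=
  exists u v j, is_dist u v j /\ k <= j.

Definition inND (D : seq nat) (u v : T) : bool :=
  has (is_dist u v) D.

Definition omegaD (D : seq nat) (f : T -> nat) (u : T) : nat :=
  \sum_(v | inND D u v) f v.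

Definition labeling (f : T -> nat) : Prop :=
  injective f /\ forall x, 0 < f x <= #|T|.

Definition antimagic (D : seq nat) : Prop :=
  D != [::] /\ (forall k, k \in D -> le_diam k) /\
  exists f, labeling f /\ injective (omegaD D f).

End OrientedGraphs.

(* Oriented star K_{1,n}: vertex None is the center, Some k the k-th leaf;
   o k = true means the arc goes center -> leaf k, false means leaf k -> center. *)
Definition star_arc (n : nat) (o : 'I_n -> bool) (a b : option 'I_n) : bool :=
  match a, b with
  | None, Some k => o k
  | Some k, None => ~~ o k
  | _, _ => false
  end.

(* m disjoint copies of the oriented star: vertices (copy index, star vertex) *)
Definition mstar_arc (m n : nat) (o : 'I_n -> bool) : rel ('I_m * option 'I_n) :=
  fun x y => (x.1 == y.1) && star_arc o x.2 y.2.

(* center is neither a sink (has an out-arc) nor a source (has an in-arc) *)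
Definition center_not_sink_source (n : nat) (o : 'I_n -> bool) : Prop :=
  (exists k, o k) /\ (exists k, ~~ o k).

Arguments mstar_arc m {n} o.

From mathcomp Require Import all_boot.
From mathcomp Require Import zify.
Set Implicit Arguments. Unset Strict Implicit. Unset Printing Implicit Defensive.

(* Distances in a disjoint union of oriented stars never exceed 2, and
   d(u, v) = 2 exactly when u is an in-leaf and v an out-leaf of the same star,
   so {0,2} and {0,1,2} are admissible distance sets only if the center has
   both an in-arc and an out-arc.  Conversely, label the out-leaves first, then
   the centers, then the in-leaves star by star.  Each D-weight is the vertex's
   own label plus a term built from the labels of its star's center and
   out-leaves; for this labeling that term is a nondecreasing function of the
   label, so the weights strictly increase with the label. *)

Section Distances.
Variables (T : finType) (arc : rel T).

Lemma walkn1 u v : walkn arc 1 u v = arc u v.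
Proof.
apply/existsP/idP => [[w /andP[uw /eqP <-]] // | uv].
by exists v; rewrite uv eqxx.
Qed.

Lemma walkn2 u v : walkn arc 2 u v = [exists w, arc u w && arc w v].
Proof. by apply: eq_existsb => w; congr (_ && _); exact: walkn1. Qed.

Lemma walkn_prefix2 k u v : walkn arc k.+2 u v -> exists w, walkn arc 2 u w.
Proof.
case/existsP=> w /andP[uw /existsP[w' /andP[ww' _]]].
by exists w'; rewrite walkn2; apply/existsP; exists w; rewrite uw.
Qed.

Lemma is_dist0 u v : is_dist arc u v 0 = (u == v).
Proof. by rewrite /is_dist /=; case: eqP => //= _; apply/forallP => -[]. Qed.

Lemma is_dist1 u v : is_dist arc u v 1 = (u != v) && arc u v.
Proof.
rewrite /is_dist walkn1 andbC; congr (_ && _).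
by apply/forallP/idP => [/(_ ord0) | uv [[|//] ?]].
Qed.

Lemma is_dist2 u v :
  is_dist arc u v 2 = [&& walkn arc 2 u v, u != v & ~~ arc u v].
Proof.
rewrite /is_dist; congr (_ && _).
apply/forallP/andP => [h | [uv nuv] [[|[|//]] ?] //]; last by rewrite walkn1.
by split; [exact: (h ord0) | rewrite -walkn1; exact: (h (Ordinal (isT : 1 < 2)))].
Qed.

End Distances.

Lemma comono_addn_inj (A : Type) (f g : A -> nat) :
  injective f -> (forall u v, f u < f v -> g u <= g v) ->
  injective (fun u => f u + g u).
Proof.
move=> f_inj g_mono u v e; apply: f_inj.
by case: (ltngtP (f u) (f v)) => // /[dup] /g_mono; lia.
Qed.

Lemma sum_predU1 (A : finType) (P : pred A) u (F : A -> nat) :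
  ~~ P u -> \sum_(v | (v == u) || P v) F v = F u + \sum_(v | P v) F v.
Proof.
move=> Pu; rewrite (bigD1 u) ?eqxx //; congr (_ + _); apply: eq_bigl => v.
by case: eqVneq => [->|] /=; [rewrite (negbTE Pu) | rewrite andbT].
Qed.

Lemma eq_mulnD d x y r s :
  r < d -> s < d -> x * d + r = y * d + s -> x = y /\ r = s.
Proof.
move=> rd sd e; have rs : r = s.
  by move: (congr1 (modn^~ d) e); rewrite /= !modnMDl !modn_small.
by split=> //; nia.
Qed.

Lemma leq_of_mulnD_ltn d x y r s : s < d -> x * d + r < y * d + s -> x <= y.
Proof.
move=> sd lt; rewrite leqNgt; apply/negP => yx.
have : y.+1 * d <= x * d by rewrite leq_mul2r yx orbT.
lia.
Qed.

Section Rank.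
Variables (I : finType) (P : pred I).

Definition rank_in (k : I) : nat := index k (enum P).

Lemma rank_in_lt k : P k -> rank_in k < #|P|.
Proof. by move=> Pk; rewrite cardE index_mem mem_enum. Qed.

Lemma rank_in_inj : {in P &, injective rank_in}.
Proof. by move=> k l Pk Pl; apply: (index_inj k); rewrite mem_enum. Qed.

End Rank.

Section OrientedStars.
Variables (m n : nat) (o : 'I_n -> bool).
Local Notation V := ('I_m * option 'I_n)%type.
Local Notation arc := (mstar_arc m o).

Definition out_leaf (u : V) : bool := if u is (_, Some k) then o k else false.
Definition in_leaf (u : V) : bool := if u is (_, Some k) then ~~ o k else false.

Variant vertex_spec : V -> Type :=
  | Center i : vertex_spec (i, None)
  | OutLeaf i k of o k : vertex_spec (i, Some k)
  | InLeaf i k of o k = false : vertex_spec (i, Some k).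

Lemma vertexP u : vertex_spec u.
Proof.
case: u => i [k|]; last exact: Center.
by case ok: (o k); [apply: OutLeaf | apply: InLeaf].
Qed.

Lemma arc_center i v : arc (i, None) v = (v.1 == i) && out_leaf v.
Proof. by case: v => j [y|]; rewrite /mstar_arc /= ?andbF // eq_sym. Qed.

Lemma arc_leaf i k v : arc (i, Some k) v = ~~ o k && (v == (i, None)).
Proof.
by case: v => j [y|]; rewrite /mstar_arc /= xpair_eqE /= ?andbF ?andbT // andbC eq_sym.
Qed.

Definition two_step (u v : V) : bool := [&& in_leaf u, v.1 == u.1 & out_leaf v].

Lemma walkn2_mstar u v : walkn arc 2 u v = two_step u v.
Proof.
rewrite walkn2; apply/existsP/idP => [[w] | ].
  case: (vertexP u) => [i | i k ok | i k ok]; rewrite ?arc_center ?arc_leaf ?ok //=.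
    case/andP=> /andP[_ ow]; case: (vertexP w) ow => [//|j l ol|j l ol]; rewrite /= ?ol //.
    by rewrite arc_leaf ol.
  by case/andP=> /eqP-> ; rewrite arc_center /two_step /= ok.
case/and3P=> iu vu ov; exists (u.1, None); rewrite arc_center vu ov andbT.
by case: (vertexP u) iu => [//|i k ok|i k ok]; rewrite /= ?ok // arc_leaf ok /= eqxx.
Qed.

Lemma is_dist1_mstar u v : is_dist arc u v 1 = arc u v.
Proof.
rewrite is_dist1; apply/andb_idl; apply: contraTneq => ->.
by case: v => i [k|]; rewrite /mstar_arc /= eqxx //=; case: (o k).
Qed.

Lemma is_dist2_mstar u v : is_dist arc u v 2 = two_step u v.
Proof.
rewrite is_dist2 walkn2_mstar; apply/andb_idr => /and3P[].
case: (vertexP u) => [// | i k ok | i k ok]; rewrite /= ?ok // => _ _.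
case: (vertexP v) => [// | j l ol | j l ol]; rewrite /= ?ol // => _.
rewrite arc_leaf ok !xpair_eqE /= andbF andbT; apply/negP => /andP[_ /eqP[kl]].
by rewrite kl ol in ok.
Qed.

Lemma inND02_mstar u v : inND arc [:: 0; 2] u v = (v == u) || two_step u v.
Proof. by rewrite /inND /= is_dist0 is_dist2_mstar orbF eq_sym. Qed.

Lemma inND012_mstar u v :
  inND arc [:: 0; 1; 2] u v = [|| v == u, arc u v | two_step u v].
Proof. by rewrite /inND /= is_dist0 is_dist1_mstar is_dist2_mstar orbF eq_sym. Qed.

Definition out_sum (f : V -> nat) (i : 'I_m) : nat := \sum_(k | o k) f (i, Some k).

Lemma sum_out_leaves (f : V -> nat) i :
  \sum_(v | (v.1 == i) && out_leaf v) f v = out_sum f i.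
Proof.
rewrite (eq_bigl (fun v => (v.1 == i) && out_leaf (v.1, v.2))); last by case.
rewrite (eq_bigr (fun v => f (v.1, v.2))); last by case.
rewrite -(pair_big_dep (pred1 i) (fun j x => out_leaf (j, x)) (fun j x => f (j, x))).
rewrite big_pred1_eq (reindex_omap Some id); last by case.
by apply: eq_bigl => k /=; rewrite eqxx andbT.
Qed.

Definition extra02 (f : V -> nat) (u : V) : nat :=
  if in_leaf u then out_sum f u.1 else 0.

Definition extra012 (f : V -> nat) (u : V) : nat :=
  match u with
  | (i, None) => out_sum f i
  | (i, Some k) => if o k then 0 else f (i, None) + out_sum f i
  end.

Lemma omega02E f u : omegaD arc [:: 0; 2] f u = f u + extra02 f u.
Proof.
rewrite /omegaD (eq_bigl _ _ (inND02_mstar u)) sum_predU1; last first.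
  by case: (vertexP u) => [i | i k ok | i k ok]; rewrite /two_step /= ?ok ?andbF.
congr (_ + _); rewrite /extra02 -sum_out_leaves.
by case: ifP => iu; [apply: eq_bigl | rewrite big_pred0] => // v; rewrite /two_step iu.
Qed.

Lemma omega012E f u : omegaD arc [:: 0; 1; 2] f u = f u + extra012 f u.
Proof.
rewrite /omegaD (eq_bigl _ _ (inND012_mstar u)).
case: (vertexP u) => [i | i k ok | i k ok]; rewrite /extra012 ?ok.
- rewrite (eq_bigl (fun v => (v == (i, None)) || ((v.1 == i) && out_leaf v))).
    by rewrite sum_predU1 ?sum_out_leaves //= andbF.
  by move=> v; rewrite arc_center /two_step orbF.
- rewrite (eq_bigl (pred1 (i, Some k))) ?big_pred1_eq ?addn0 // => v.
  by rewrite arc_leaf /two_step /= ok !orbF.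
- rewrite (eq_bigl (fun v => (v == (i, Some k)) ||
      ((v == (i, None)) || ((v.1 == i) && out_leaf v)))).
    by rewrite !sum_predU1 ?sum_out_leaves ?addnA //= ?andbF // xpair_eqE ok andbF.
  by move=> v; rewrite arc_leaf /two_step /= ok.
Qed.

Local Notation dout := #|o|.
Local Notation din := #|predC o|.

(* Out-leaves are ranked leaf-major, so the out-leaf sum of copy i is a
   constant plus dout * i.+1. *)
Definition star_label (u : V) : nat :=
  match u with
  | (i, None) => m * dout + i + 1
  | (i, Some k) => if o k then rank_in o k * m + i + 1
                   else m * dout.+1 + i * din + rank_in (predC o) k + 1
  end.

Lemma rank_in_predC_lt k : o k = false -> rank_in (predC o) k < din.
Proof. by move=> ok; apply: rank_in_lt; rewrite /= ok. Qed.

Lemma star_label_out_leaf i k : o k -> star_label (i, Some k) <= m * dout.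
Proof.
move=> ok; rewrite /= ok; have := ltn_ord i; have := rank_in_lt ok.
move: (rank_in o k) => r lt_r lt_i.
have : r.+1 * m <= dout * m by rewrite leq_mul2r lt_r orbT.
lia.
Qed.

Lemma star_label_center i : m * dout < star_label (i, None) <= m * dout.+1.
Proof. by have := ltn_ord i; rewrite /=; lia. Qed.

Lemma star_label_in_leaf i k : o k = false ->
  m * dout.+1 < star_label (i, Some k) <= m * dout.+1 + m * din.
Proof.
move=> ok; rewrite /= ok; have := ltn_ord i; have := rank_in_predC_lt ok.
move: (rank_in _ k) => r lt_r lt_i.
have : i.+1 * din <= m * din by rewrite leq_mul2r lt_i orbT.
lia.
Qed.

Definition label_block (u : V) : nat :=
  match u with (_, None) => 1 | (_, Some k) => if o k then 0 else 2 end.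

Lemma star_label_block_lt u v :
  label_block u < label_block v -> star_label u < star_label v.
Proof.
case: (vertexP u) => [i | i k ok | i k ok]; case: (vertexP v) => [j | j l ol | j l ol];
  rewrite /label_block ?ok ?ol // => _.
- by have := star_label_center i; have := star_label_in_leaf j ol; lia.
- by have := star_label_out_leaf i ok; have := star_label_center j; lia.
- by have := star_label_out_leaf i ok; have := star_label_in_leaf j ol; lia.
Qed.

Lemma star_label_block_le u v :
  star_label u < star_label v -> label_block u <= label_block v.
Proof. by move=> lt; rewrite leqNgt; apply/negP => /star_label_block_lt; lia. Qed.

Lemma star_label_inj : injective star_label.
Proof.
move=> u v e; have : label_block u = label_block v.
  by case: (ltngtP (label_block u) (label_block v)) => // /star_label_block_lt;
    rewrite e ltnn.
case: (vertexP u) e => [i | i k ok | i k ok]; case: (vertexP v) => [j | j l ol | j l ol];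
  rewrite /= ?ok ?ol // => e _.
- by congr (_, _); apply: ord_inj; lia.
- have [kl ij] := eq_mulnD (ltn_ord i) (ltn_ord j) (addIn e).
  by rewrite (ord_inj ij) (rank_in_inj ok ol kl).
- have {}e : i * din + rank_in (predC o) k = j * din + rank_in (predC o) l by lia.
  have [ij kl] := eq_mulnD (rank_in_predC_lt ok) (rank_in_predC_lt ol) e.
  by rewrite (ord_inj ij) (rank_in_inj _ _ kl) // inE /= ?ok ?ol.
Qed.

Lemma star_label_range u : 0 < star_label u <= #|{: V}|.
Proof.
have card_V : #|{: V}| = m * dout.+1 + m * din.
  have n_eq : dout + din = n.
    by rewrite -[RHS]card_ord -(cardC o); congr (_ + _); exact: eq_card.
  by rewrite card_prod card_option !card_ord; nia.
rewrite card_V; case: (vertexP u) => [i | i k ok | i k ok].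
- by have := star_label_center i; lia.
- by have := star_label_out_leaf i ok; rewrite /= ok; lia.
- by have := star_label_in_leaf i ok; lia.
Qed.

Lemma out_sum_star_label i :
  out_sum star_label i = \sum_(k | o k) rank_in o k * m + dout * i.+1.
Proof.
rewrite /out_sum (eq_bigr (fun k => rank_in o k * m + i.+1)) => [|k ok]; last first.
  by rewrite /= ok addn1 addnS.
by rewrite big_split sum_nat_const mulnC.
Qed.

Lemma out_sum_star_label_homo : {homo out_sum star_label : i j / i <= j}.
Proof. by move=> i j ij; rewrite !out_sum_star_label leq_add2l leq_mul2l ltnS ij orbT. Qed.

Lemma out_sum_star_label_le i j :
  out_sum star_label i <= star_label (j, None) + out_sum star_label j.
Proof.
rewrite !out_sum_star_label /=; have : dout * i.+1 <= dout * m.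
  by rewrite leq_mul2l ltn_ord orbT.
lia.
Qed.

Lemma star_label_in_leaf_lt i k j l : o k = false -> o l = false ->
  star_label (i, Some k) < star_label (j, Some l) -> i <= j.
Proof.
move=> ok ol; rewrite /= ok ol => lt.
by apply: (leq_of_mulnD_ltn (r := rank_in (predC o) k) (rank_in_predC_lt ol)); lia.
Qed.

Lemma extra02_star_label_comono u v :
  star_label u < star_label v -> extra02 star_label u <= extra02 star_label v.
Proof.
case: (vertexP u) => [i | i k ok | i k ok]; case: (vertexP v) => [j | j l ol | j l ol] => lt;
  have := star_label_block_le lt; rewrite /label_block /extra02 /= ?ok ?ol //= => _.
exact: out_sum_star_label_homo (star_label_in_leaf_lt ok ol lt).
Qed.

Lemma extra012_star_label_comono u v :
  star_label u < star_label v -> extra012 star_label u <= extra012 star_label v.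
Proof.
case: (vertexP u) => [i | i k ok | i k ok]; case: (vertexP v) => [j | j l ol | j l ol] => lt;
  have := star_label_block_le lt; rewrite /label_block /extra012 /= ?ok ?ol //= => _.
- by apply: out_sum_star_label_homo; move: lt; rewrite /=; lia.
- exact: out_sum_star_label_le.
- have ij := star_label_in_leaf_lt ok ol lt.
  by rewrite leq_add ?out_sum_star_label_homo //=; lia.
Qed.

Lemma star_label_labeling : labeling star_label.
Proof. by split; [exact: star_label_inj | exact: star_label_range]. Qed.

Lemma omega02_star_label_inj : injective (omegaD arc [:: 0; 2] star_label).
Proof.
move=> u v; rewrite !omega02E.
exact: (comono_addn_inj star_label_inj extra02_star_label_comono).
Qed.

Lemma omega012_star_label_inj : injective (omegaD arc [:: 0; 1; 2] star_label).
Proof.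
move=> u v; rewrite !omega012E.
exact: (comono_addn_inj star_label_inj extra012_star_label_comono).
Qed.

Lemma le_diam_mstar k : 0 < m -> k <= 2 -> center_not_sink_source o -> le_diam arc k.
Proof.
move=> m_gt0 k_le2 [[l ol] [k' ok']]; pose i := Ordinal m_gt0.
exists (i, Some k'), (i, Some l), 2; split=> //.
by rewrite is_dist2_mstar /two_step /= ok' ol ?eqxx.
Qed.

Lemma center_not_sink_source_of_le_diam2 : le_diam arc 2 -> center_not_sink_source o.
Proof.
case=> u [v [j [/andP[walk _] j_ge2]]].
case: j j_ge2 walk => [|[|j]] // _ /walkn_prefix2[w].
rewrite walkn2_mstar => /and3P[iu _ ow].
by case: u iu => i [k|] //= ok; case: w ow => j' [l|] //= ol; split; [exists l | exists k].
Qed.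

Lemma antimagic_mstarE D : 0 < m -> 2 \in D -> all (leq^~ 2) D ->
  injective (omegaD arc D star_label) ->
  antimagic arc D <-> center_not_sink_source o.
Proof.
move=> m_gt0 D2 D_le2 omega_inj; split=> [[_ [diam _]] | cnss].
  exact/center_not_sink_source_of_le_diam2/diam.
split; first by apply: contraTneq D2 => ->.
split; first by move=> k /(allP D_le2) k_le2; exact: le_diam_mstar.
by exists star_label; split; [exact: star_label_labeling | exact: omega_inj].
Qed.

End OrientedStars.

Theorem mainTheorem8 (m n : nat) (o : 'I_n -> bool) :
  2 <= m -> 1 <= n ->
  (antimagic (mstar_arc m o) [:: 0; 2] <-> center_not_sink_source o) /\
  (antimagic (mstar_arc m o) [:: 0; 1; 2] <-> center_not_sink_source o).
Proof.
move=> /ltnW m_gt0 _.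
split; apply: antimagic_mstarE => //.
- exact: omega02_star_label_inj.
- exact: omega012_star_label_inj.
Qed.
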